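(* Let $p\ge1$ and $s_1,\dots,s_p\in\mathbb{C}$. For all $m,l\in\mathbb{Z}_{\ge0}$, $(\Delta^l\mathtt{c}_{s_1,\dots,s_p})(m)=\mathtt{c}_{s_1,\dots,s_p;\,1-s_1,\dots,1-s_p}(m,l)$.
   Context: Convention $0^0=1$. $\mathtt{c}_{s_1,\dots,s_p}(m)=\sum_{m=m_1\ge\cdots\ge m_p\ge0}\frac{s_1^{m_1-m_2}\cdots s_{p-1}^{m_{p-1}-m_p}}{(m_1+1)\cdots(m_{p-1}+1)}s_p^{m_p}$. For $t_1,\dots,t_p\in\mathbb{C}$, $\mathtt{c}_{s_1,\dots,s_p;t_1,\dots,t_p}(m,l)=\binom{m+l}{m}^{-1}\sum_{m=m_1\ge\cdots\ge m_p\ge0,\ l=l_1\ge\cdots\ge l_p\ge0}\Bigl[\prod_{i=1}^{p-1}\binom{m_i-m_{i+1}+l_i-l_{i+1}}{m_i-m_{i+1}}\frac{s_i^{m_i-m_{i+1}}t_i^{l_i-l_{i+1}}}{m_i+l_i+1}\Bigr]\binom{m_p+l_p}{m_p}s_p^{m_p}t_p^{l_p}$. The difference operator is $(\Delta a)(m)=a(m)-a(m+1)$. *)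

(* Complex numbers are modelled as R[i] (mathcomp-real-closed
   `complex`) over an arbitrary R : realType, i.e. over the real numbers. *)
From mathcomp Require Import all_boot all_order all_algebra.
From mathcomp Require Import complex.
From mathcomp Require Import reals.
Set Implicit Arguments. Unset Strict Implicit. Unset Printing Implicit Defensive.
Import Order.TTheory GRing.Theory Num.Theory.
Local Open Scope ring_scope.

Section Defs.
Variable C : fieldType.

(* c_{s_1,...,s_p}(m), written as the iterated sum over m = m_1 >= ... >= m_p >= 0:
   c_{[s]}(m) = s^m (with 0^0 = 1), and
   c_{s_1 :: rest}(m) = sum_{m_2 = 0}^{m} s_1^(m - m_2) / (m+1) * c_{rest}(m_2).
   The empty list (p = 0) is junk (value 0) and is excluded in the theorem. *)
Fixpoint c1 (s : seq C) (m : nat) : C :=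
  match s with
  | [::] => 0
  | [:: a] => a ^+ m
  | a :: s' => \sum_(k < m.+1) a ^+ (m - k) / (m.+1)%:R * c1 s' k
  end.

(* The un-normalised double iterated sum over m = m_1 >= ... >= m_p >= 0 and
   l = l_1 >= ... >= l_p >= 0, for a list of pairs (s_i, t_i). *)
Fixpoint c2sum (st : seq (C * C)) (m l : nat) : C :=
  match st with
  | [::] => 0
  | [:: (a, b)] => ('C(m + l, m))%:R * a ^+ m * b ^+ l
  | (a, b) :: st' =>
      \sum_(k < m.+1) \sum_(j < l.+1)
        ('C(m - k + (l - j), m - k))%:R * (a ^+ (m - k) * b ^+ (l - j))
          / (m + l).+1%:R * c2sum st' k j
  end.

Definition c2 (s t : seq C) (m l : nat) : C :=
  ('C(m + l, m))%:R^-1 * c2sum (zip s t) m l.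

Definition Delta (a : nat -> C) : nat -> C := fun m => a m - a m.+1.

End Defs.

From mathcomp Require Import all_boot all_order all_algebra.
From mathcomp Require Import complex.
From mathcomp Require Import reals.
From mathcomp Require Import ring zify.
Set Implicit Arguments. Unset Strict Implicit. Unset Printing Implicit Defensive.
Import GRing.Theory Num.Theory.
Local Open Scope ring_scope.

(* Call a table f(a, c) Pascal if
   (a+1) f(a+1, c) + (c+1) f(a, c+1) = (a+c+1) f(a, c).  Writing
   f(a, c) = C(a+c, a) g(a, c), f is Pascal exactly when g(., c+1) = Delta g(., c),
   i.e. when g(a, c) = (Delta^c g(., 0))(a).  Both C(a+c,a) s^a (1-s)^c and
   C(k+j,k) (Delta^j b)(k) are Pascal, and the double convolution of two Pascal
   tables, divided by m+l+1, is again Pascal.  Its row c = 0 is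
   m |-> sum_k s^(m-k)/(m+1) b(k), the recursive step defining c_{s_1,...,s_p}, so
   Delta^l of that step is the normalised convolution; induction on p concludes. *)

Section DifferenceTables.
Variable C : numFieldType.
Implicit Types (f g : nat -> nat -> C) (b : nat -> C).

Definition Delta_table g := forall a c, g a c.+1 = Delta (g^~ c) a.

Lemma Delta_tableE g b : Delta_table g -> g^~ 0%N =1 b ->
  forall a c, g a c = iter c (@Delta C) b a.
Proof.
move=> Dg g0 a c; elim: c a => [|c IHc] a; first exact: g0.
by rewrite Dg iterS /Delta !IHc.
Qed.

Lemma Delta_table_expr (s : C) : Delta_table (fun a c => s ^+ a * (1 - s) ^+ c).
Proof. by move=> a c; rewrite /Delta !exprS; ring. Qed.

Lemma iter_Delta_expr (s : C) m l :
  iter l (@Delta C) (fun m => s ^+ m) m = s ^+ m * (1 - s) ^+ l.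
Proof.
rewrite (Delta_tableE (Delta_table_expr s) (b := fun m => s ^+ m)) // => a.
by rewrite mulr1.
Qed.

Definition pascal_rel f := forall a c,
  a.+1%:R * f a.+1 c + c.+1%:R * f a c.+1 = (a + c).+1%:R * f a c.

Lemma natr_binom_neq0 a c : ('C(a + c, a)%:R : C) != 0.
Proof. by rewrite pnatr_eq0 -lt0n bin_gt0 leq_addr. Qed.

Lemma pascal_relP f g : (forall a c, f a c = 'C(a + c, a)%:R * g a c) ->
  pascal_rel f <-> Delta_table g.
Proof.
move=> fE.
have step a c : a.+1%:R * f a.+1 c + c.+1%:R * f a c.+1
    = (a + c).+1%:R * 'C(a + c, a)%:R * (g a.+1 c + g a c.+1).
  have diag : (a.+1 * 'C((a + c).+1, a.+1) = (a + c).+1 * 'C(a + c, a))%N.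
    by rewrite -mul_bin_diag.
  have down : (c.+1 * 'C((a + c).+1, a) = (a + c).+1 * 'C(a + c, a))%N.
    by rewrite mul_bin_down subSn ?leq_addr // addKn.
  rewrite !fE addSn addnS !mulrA -!natrM diag down natrM; ring.
have nz a c : (a + c).+1%:R * 'C(a + c, a)%:R != 0 :> C.
  by rewrite mulf_neq0 ?natr_binom_neq0 ?pnatr_eq0.
split=> [Pf a c | Dg a c].
- rewrite /Delta; move: (Pf a c); rewrite step fE mulrA => /(mulfI (nz a c)) <-.
  by rewrite addrC addKr.
- by rewrite step fE mulrA Dg /Delta addrC subrK.
Qed.

Definition binom_geom (s : C) a c := 'C(a + c, a)%:R * (s ^+ a * (1 - s) ^+ c).

Definition binom_Delta b k j := 'C(k + j, k)%:R * iter j (@Delta C) b k.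

Lemma binom_geom_pascal s : pascal_rel (binom_geom s).
Proof.
apply/(pascal_relP (g := fun a c => s ^+ a * (1 - s) ^+ c) (fun _ _ => erefl)).
exact: Delta_table_expr.
Qed.

Lemma binom_Delta_pascal b : pascal_rel (binom_Delta b).
Proof. by apply/(pascal_relP (g := fun k j => iter j (@Delta C) b k) (fun _ _ => erefl)). Qed.

End DifferenceTables.

Section Convolution.
Variable C : numFieldType.
Implicit Types f g : nat -> nat -> C.

Definition conv f g m l : C :=
  \sum_(k < m.+1) \sum_(j < l.+1) f (m - k)%N (l - j)%N * g k j.

Lemma conv_flip f g m l : conv f g m l = conv (fun a c => f c a) (fun k j => g j k) l m.
Proof. exact: exchange_big. Qed.

Lemma sum_antidiag_weight (F : nat -> nat -> C) n :
  \sum_(k < n.+2) n.+1%:R * F (n.+1 - k)%N k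
  = \sum_(k < n.+1) ((n - k).+1%:R * F (n - k).+1 k + k.+1%:R * F (n - k)%N k.+1).
Proof.
have split_weight (k : 'I_n.+2) :
    n.+1%:R * F (n.+1 - k)%N k = (n.+1 - k)%N%:R * F (n.+1 - k)%N k + k%:R * F (n.+1 - k)%N k.
  by rewrite -mulrDl -natrD subnK // -ltnS.
rewrite (eq_bigr _ (fun k _ => split_weight k)) big_split /=.
rewrite big_ord_recr /= subnn mul0r addr0 [X in _ + X]big_ord_recl /= mul0r add0r.
rewrite -big_split /=; apply: eq_bigr => k _.
by rewrite /bump /= add1n subSn // -ltnS.
Qed.

Lemma conv_succl f g m l :
  m.+1%:R * conv f g m.+1 l
  = conv (fun a c => a.+1%:R * f a.+1 c) g m l + conv f (fun k j => k.+1%:R * g k.+1 j) m l.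
Proof.
rewrite /conv mulr_sumr.
rewrite (sum_antidiag_weight (fun a k => \sum_(j < l.+1) f a (l - j)%N * g k j)).
rewrite -big_split /=; apply: eq_bigr => k _.
rewrite !mulr_sumr -!big_split /=; apply: eq_bigr => j _; ring.
Qed.

Lemma conv_succr f g m l :
  l.+1%:R * conv f g m l.+1
  = conv (fun a c => c.+1%:R * f a c.+1) g m l + conv f (fun k j => j.+1%:R * g k j.+1) m l.
Proof. by rewrite conv_flip conv_succl; congr (_ + _); rewrite [RHS]conv_flip. Qed.

Lemma conv_pascal f g : pascal_rel f -> pascal_rel g ->
  pascal_rel (fun m l => conv f g m l / (m + l).+1%:R).
Proof.
move=> Pf Pg m l.
have sum_rel : m.+1%:R * conv f g m.+1 l + l.+1%:R * conv f g m l.+1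
    = (m + l).+2%:R * conv f g m l.
  rewrite conv_succl conv_succr /conv mulr_sumr -!big_split /=.
  apply: eq_bigr => k _; rewrite mulr_sumr -!big_split /=.
  apply: eq_bigr => j _.
  have weight : (m + l).+2%:R = (m - k + (l - j)).+1%:R + (k + j).+1%:R :> C.
    by rewrite -natrD; congr _%:R; have := ltn_ord k; have := ltn_ord j; lia.
  by rewrite weight mulrDl [in RHS]mulrA -Pf [in RHS]mulrCA -Pg; ring.
rewrite addSn addnS !mulrA -mulrDl sum_rel ![_ * conv f g m l]mulrC.
by rewrite -!mulrA !divff ?mulr1 ?pnatr_eq0.
Qed.

End Convolution.

Section GeometricAverage.
Variable C : numFieldType.

(* The recursive step of c1: c1 (s :: rest) = geom_avg s (c1 rest) for nonempty rest. *)
Definition geom_avg (s : C) (b : nat -> C) m :=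
  \sum_(k < m.+1) s ^+ (m - k) / m.+1%:R * b k.

Lemma iter_Delta_geom_avg s b m l :
  'C(m + l, m)%:R * iter l (@Delta C) (geom_avg s b) m
  = conv (binom_geom s) (binom_Delta b) m l / (m + l).+1%:R.
Proof.
pose h m l := conv (binom_geom s) (binom_Delta b) m l / (m + l).+1%:R.
have hE a c : h a c = 'C(a + c, a)%:R * (h a c / 'C(a + c, a)%:R).
  by rewrite mulrC divfK ?natr_binom_neq0.
have /(pascal_relP hE) Dg := conv_pascal (binom_geom_pascal s) (binom_Delta_pascal b).
have row0 a : h a 0%N / 'C(a + 0, a)%:R = geom_avg s b a.
  rewrite /h /conv addn0 binn divr1 mulr_suml.
  apply: eq_bigr => k _; rewrite big_ord1 /binom_geom /binom_Delta /= !addn0 !binn.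
  by rewrite subn0 expr0 !mulr1 !mul1r mulrAC.
by rewrite -(Delta_tableE Dg row0) -hE.
Qed.

Lemma c2sum_cons (a t : C) p st m l :
  c2sum ((a, t) :: p :: st) m l =
  \sum_(k < m.+1) \sum_(j < l.+1)
    'C(m - k + (l - j), m - k)%:R * (a ^+ (m - k) * t ^+ (l - j))
      / (m + l).+1%:R * c2sum (p :: st) k j.
Proof. by case: p. Qed.

Lemma c2sum_zip_1sub (s : seq C) m l : (0 < size s)%N ->
  c2sum (zip s [seq 1 - x | x <- s]) m l = 'C(m + l, m)%:R * iter l (@Delta C) (c1 s) m.
Proof.
elim: s m l => [//|a [|b rest] IH] m l _.
  by rewrite /= iter_Delta_expr mulrA.
rewrite [zip _ _]/= c2sum_cons [c1 _]/= -/(geom_avg a (c1 (b :: rest))).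
rewrite iter_Delta_geom_avg /conv mulr_suml.
apply: eq_bigr => k _; rewrite mulr_suml; apply: eq_bigr => j _.
by rewrite IH // [RHS]mulrAC.
Qed.

End GeometricAverage.

Local Open Scope complex_scope.

Theorem proposition3p2 (R : realType) (s : seq R[i]) :
  (0 < size s)%N ->
  forall m l : nat,
    iter l (@Delta _) (c1 s) m = c2 s [seq 1 - x | x <- s] m l.
Proof.
move=> s_gt0 m l.
by rewrite /c2 c2sum_zip_1sub // mulKf ?natr_binom_neq0.
Qed.
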